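(* Under the hypotheses and notation of the preceding statement (so $a<b$ coprime positive integers, $\alpha=\sqrt{b/a}\notin\mathbb{Q}$, $\Gamma$ a full-rank lattice in $\mathbb{Z}^2$ with basis $\mathbf e_1=(\lambda_1,\mu_1),\mathbf e_2=(\lambda_2,\mu_2)$ satisfying $\|\mathbf e_1\|\le2\nu_2$, $\|\mathbf e_2\|\le2\nu_1$, and $\theta=-\frac{\lambda_1-\alpha\mu_1}{\lambda_2-\alpha\mu_2}$), for every $N>1$, $$ND_\alpha(N)=O\Big(\frac{b}{\log b}\log N\Big),\qquad ND_\theta(N)=O\Big(\frac{b\det\Gamma}{\log(b\det\Gamma)}\log N\Big),$$ with absolute implied constants.
   Context: $\|(x,y)\|=\max(|x|,|y|)$; $\nu_1\le\nu_2$ are the successive minima of $\Gamma$ for this norm. For real $\vartheta$, $D_\vartheta(N)=\sup_{\lambda\in[0,1]}\big|\frac{\#\{1\le n\le N:\{n\vartheta\}\in[0,\lambda]\}}{N}-\lambda\big|$, $\{x\}$ denoting the fractional part. *)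

From Stdlib Require Import Reals Lra Lia ZArith.
From Stdlib Require Import ClassicalEpsilon.
Open Scope R_scope.

(** Fractional part {x} = x - floor x  (Stdlib: frac_part x = x - IZR (Int_part x),
    Int_part x = up x - 1 = floor x). *)
Definition frac (x : R) : R := frac_part x.

Fixpoint count_in (theta lam : R) (N : nat) : nat :=
  match N with
  | O => O
  | S k => (count_in theta lam k +
            (if Rle_dec 0 (frac (INR (S k) * theta)) then
               if Rle_dec (frac (INR (S k) * theta)) lam then 1 else 0
             else 0))%nat
  end.

Lemma count_in_le theta lam N : (count_in theta lam N <= N)%nat.
Proof.
  induction N as [|k IH]; simpl; [lia|].
  destruct (Rle_dec _ _); [destruct (Rle_dec _ _)|]; lia.
Qed.

Definition disc_set (theta : R) (N : nat) : R -> Prop :=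
  fun d => exists lam, 0 <= lam <= 1 /\
    d = Rabs (INR (count_in theta lam N) / INR N - lam).

Lemma disc_set_bound theta N : bound (disc_set theta N).
Proof.
  exists (INR N * Rabs (/ INR N) + 1).
  intros d [lam [Hl ->]].
  unfold Rdiv.
  eapply Rle_trans; [apply Rabs_triang|].
  rewrite Rabs_Ropp, Rabs_mult, (Rabs_right (INR _)) by (apply Rle_ge, pos_INR).
  assert (H := le_INR _ _ (count_in_le theta lam N)).
  assert (0 <= Rabs (/ INR N)) by apply Rabs_pos.
  rewrite (Rabs_right lam) by lra.
  apply Rplus_le_compat; [|lra].
  apply Rmult_le_compat_r; lra.
Qed.

Lemma disc_set_nonempty theta N : exists d, disc_set theta N d.
Proof.
  exists (Rabs (INR (count_in theta 0 N) / INR N - 0)).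
  exists 0. split; [split; apply Rle_refl || lra | reflexivity].
Qed.

Definition discrepancy (theta : R) (N : nat) : R :=
  proj1_sig (completeness (disc_set theta N) (disc_set_bound theta N)
                          (disc_set_nonempty theta N)).

Definition supnorm (v : Z * Z) : Z := Z.max (Z.abs (fst v)) (Z.abs (snd v)).

Definition in_lattice (e1 e2 v : Z * Z) : Prop :=
  exists m n : Z, fst v = (m * fst e1 + n * fst e2)%Z /\
                  snd v = (m * snd e1 + n * snd e2)%Z.

Definition zdet (v w : Z * Z) : Z := (fst v * snd w - snd v * fst w)%Z.

Definition lattice_det (e1 e2 : Z * Z) : Z := Z.abs (zdet e1 e2).

Definition is_nu1 (e1 e2 : Z * Z) (nu : Z) : Prop :=
  (exists v, in_lattice e1 e2 v /\ v <> (0%Z, 0%Z) /\ supnorm v = nu) /\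
  (forall v, in_lattice e1 e2 v -> v <> (0%Z, 0%Z) -> (nu <= supnorm v)%Z).

Definition is_nu2 (e1 e2 : Z * Z) (nu : Z) : Prop :=
  (exists v w, in_lattice e1 e2 v /\ in_lattice e1 e2 w /\ zdet v w <> 0%Z /\
               Z.max (supnorm v) (supnorm w) = nu) /\
  (forall v w, in_lattice e1 e2 v -> in_lattice e1 e2 w -> zdet v w <> 0%Z ->
               (nu <= Z.max (supnorm v) (supnorm w))%Z).

From Stdlib Require Import Reals Lra Lia ZArith List Classical Arith.
Open Scope R_scope.

(* If q |q th - p| >= 1/K for all q >= 1 and all integers p, then
   N D_th(N) <= 5 (K / ln K) ln N.  Take the least q with |q th - p| < 1/N:
   in any q consecutive terms the points {n th} hit an interval of length l
   between q l - 3 and q l + 3 times, and N < K q.  Cutting [1, N] into m < K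
   blocks of length q and a remainder r < q and recursing on r gives an error
   3 m + E(r) <= 3 (K / ln K) ln N, since m / ln m <= K / ln K.
   For th = -(l1 - alpha m1)/(l2 - alpha m2) put v = q e1 + p e2: the norm
   a (v1 - alpha v2)(v1 + alpha v2) = a v1^2 - b v2^2 is a nonzero integer while
   v1 - alpha v2 = -(q th - p)(l2 - alpha m2), so q |q th - p| >= 1/(8 b det)
   once |l2|, |m2| <= 2 det, which holds as (det, 0) lies in the lattice. *)

Lemma frac_bounds x : 0 <= frac x < 1.
Proof. unfold frac; destruct (base_fp x); lra. Qed.

Lemma Rabs_le_between x e : Rabs x <= e -> - e <= x <= e.
Proof. unfold Rabs; destruct (Rcase_abs x); lra. Qed.

Definition in_interval (x y t : R) : bool :=
  if Rle_dec x t then if Rle_dec t y then true else false else false.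

Definition hits (th x y : R) (n : nat) : bool := in_interval x y (frac (INR n * th)).

Definition count_from (f : nat -> bool) (s len : nat) : nat :=
  length (filter f (seq (S s) len)).

Lemma count_in_count_from th lam N : count_in th lam N = count_from (hits th 0 lam) 0 N.
Proof.
  unfold count_from; induction N as [|N IH]; [reflexivity|].
  cbn [count_in]; rewrite IH, seq_S, filter_app, length_app.
  replace (1 + N)%nat with (S N) by lia.
  cbn [filter]; unfold hits, in_interval.
  repeat match goal with |- context[Rle_dec ?u ?v] => destruct (Rle_dec u v) end;
    simpl; lia.
Qed.

Lemma count_from_add f s a b :
  count_from f s (a + b) = (count_from f s a + count_from f (s + a) b)%nat.
Proof.
  unfold count_from; rewrite seq_app, filter_app, length_app.
  now replace (S s + a)%nat with (S (s + a)) by lia.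
Qed.

Lemma count_from_le f s n : (count_from f s n <= n)%nat.
Proof.
  unfold count_from; etransitivity; [apply filter_length_le|]; rewrite length_seq; lia.
Qed.

Lemma count_from_cover f g s n : (forall k, (f k || g k)%bool = true) ->
  (n <= count_from f s n + count_from g s n)%nat.
Proof.
  intros Hfg; unfold count_from; induction n as [|n IH]; [simpl; lia|].
  rewrite !seq_S, !filter_app, !length_app; simpl.
  specialize (Hfg (S s + n)%nat).
  destruct (f _), (g _); simpl in *; lia.
Qed.

Lemma hits_cover th lam k : (hits th 0 lam k || hits th lam 1 k)%bool = true.
Proof.
  unfold hits, in_interval; destruct (frac_bounds (INR k * th)).
  repeat match goal with |- context[Rle_dec ?u ?v] => destruct (Rle_dec u v) end;
    simpl; auto; lra.
Qed.

Lemma NoDup_Z_interval_length (l : list Z) A B : A <= B -> NoDup l ->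
  (forall z, In z l -> A < IZR z < B) -> INR (length l) <= B - A + 1.
Proof.
  intros HAB Hnd Hin.
  destruct (archimed A) as [HA1 HA2]; destruct (archimed B) as [HB1 HB2].
  assert (HAB' : (up A < up B + 1)%Z) by (apply lt_IZR; rewrite plus_IZR; lra).
  assert (Hinc : incl l (map (fun i => (up A + Z.of_nat i)%Z) (seq 0 (Z.to_nat (up B - up A))))).
  { intros z Hz; destruct (Hin z Hz) as [H1 H2].
    assert (up A < z + 1)%Z by (apply lt_IZR; rewrite plus_IZR; lra).
    assert (z < up B)%Z by (apply lt_IZR; lra).
    apply in_map_iff; exists (Z.to_nat (z - up A)); split; [lia|].
    apply in_seq; lia. }
  pose proof (le_INR _ _ (NoDup_incl_length Hnd Hinc)) as Hl.
  rewrite length_map, length_seq, (INR_IZR_INZ (Z.to_nat _)), Z2Nat.id, minus_IZR in Hl by lia.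
  lra.
Qed.

Section Block.

Variables (th eps : R) (q : nat) (p : Z).
Hypotheses (Hq : (1 <= q)%nat) (Hp : Rabs (INR q * th - IZR p) < eps)
  (Heps : eps <= / INR q)
  (Hmin : forall (j : nat) (k : Z), (1 <= j < q)%nat -> eps <= Rabs (INR j * th - IZR k)).

Let Hq0 : 0 < INR q.
Proof. apply lt_0_INR; lia. Qed.

Lemma small_multiple_ne (j : nat) (k : Z) :
  (1 <= j < q)%nat -> (Z.of_nat j * p <> Z.of_nat q * k)%Z.
Proof.
  intros Hj Hjk; specialize (Hmin j k Hj).
  apply (f_equal IZR) in Hjk; rewrite !mult_IZR, <- !INR_IZR_INZ in Hjk.
  assert (Hk : IZR k = INR j * IZR p / INR q) by (rewrite Hjk; field; lra).
  assert (Hjq : 0 < INR j / INR q < 1).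
  { assert (0 < INR j < INR q) by (split; [apply lt_0_INR|apply lt_INR]; lia).
    split; [apply Rdiv_lt_0_compat; lra|].
    apply (Rmult_lt_reg_r (INR q)); [lra|]; unfold Rdiv; rewrite Rmult_assoc, Rinv_l; lra. }
  replace (INR j * th - IZR k) with (INR j / INR q * (INR q * th - IZR p)) in Hmin
    by (rewrite Hk; field; lra).
  rewrite Rabs_mult, (Rabs_right (INR j / INR q)) in Hmin by lra.
  pose proof (Rabs_pos (INR q * th - IZR p)); nra.
Qed.

(* An integer within 1 of q ({n th} - {n0 th}); it is injective on the block
   because no j < q is a good denominator. *)
Let block_label (n0 n : nat) : Z :=
  (Z.of_nat (n - n0) * p - Z.of_nat q * (Int_part (INR n * th) - Int_part (INR n0 * th)))%Z.

Lemma block_label_near n0 n : (n0 < n <= n0 + q)%nat ->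
  Rabs (IZR (block_label n0 n) - INR q * (frac (INR n * th) - frac (INR n0 * th))) < 1.
Proof.
  intros Hn.
  assert (Hd : 1 <= INR (n - n0) <= INR q) by
    (split; [apply (le_INR 1)|apply le_INR]; lia).
  replace (IZR (block_label n0 n) - INR q * (frac (INR n * th) - frac (INR n0 * th)))
    with (- (INR (n - n0) * (INR q * th - IZR p))).
  2:{ unfold block_label, frac, frac_part.
      rewrite minus_IZR, !mult_IZR, minus_IZR, <- !INR_IZR_INZ.
      replace (INR n) with (INR n0 + INR (n - n0)) by (rewrite <- plus_INR; f_equal; lia).
      ring. }
  rewrite Rabs_Ropp, Rabs_mult, (Rabs_right (INR (n - n0))) by lra.
  assert (eps * INR q <= 1).
  { apply (Rmult_le_compat_r (INR q)) in Heps; [|lra]. rewrite Rinv_l in Heps; lra. }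
  pose proof (Rabs_pos (INR q * th - IZR p)); nra.
Qed.

Lemma block_label_inj n0 n1 n2 : (n0 < n1 <= n0 + q)%nat -> (n0 < n2 <= n0 + q)%nat ->
  block_label n0 n1 = block_label n0 n2 -> n1 = n2.
Proof.
  assert (Hlt : forall m1 m2, (n0 < m1 < m2)%nat -> (m2 <= n0 + q)%nat ->
            block_label n0 m1 <> block_label n0 m2).
  { intros m1 m2 H12 H2 He; unfold block_label in He.
    apply (small_multiple_ne (m2 - m1) (Int_part (INR m2 * th) - Int_part (INR m1 * th)));
      [lia|].
    rewrite !Nat2Z.inj_sub in * by lia; lia. }
  intros H1 H2 He.
  destruct (lt_eq_lt_dec n1 n2) as [[H|H]|H]; auto; exfalso.
  - exact (Hlt n1 n2 ltac:(lia) ltac:(lia) He).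
  - exact (Hlt n2 n1 ltac:(lia) ltac:(lia) (eq_sym He)).
Qed.

Lemma block_count_upper n0 x y : x <= y ->
  INR (count_from (hits th x y) n0 q) <= INR q * (y - x) + 3.
Proof.
  intros Hxy; unfold count_from.
  set (l := filter (hits th x y) (seq (S n0) q)).
  assert (Hl : forall n, In n l -> (n0 < n <= n0 + q)%nat /\ hits th x y n = true).
  { intros n Hn; apply filter_In in Hn as [Hn Hh]; apply in_seq in Hn; split; [lia|auto]. }
  set (F0 := frac (INR n0 * th)).
  rewrite <- (length_map (block_label n0) l).
  apply Rle_trans with ((INR q * (y - F0) + 1) - (INR q * (x - F0) - 1) + 1); [|lra].
  apply NoDup_Z_interval_length.
  - nra.
  - apply NoDup_map_NoDup_ForallPairs; [|apply NoDup_filter, seq_NoDup].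
    intros n1 n2 H1 H2; apply block_label_inj; apply Hl; auto.
  - intros z Hz; apply in_map_iff in Hz as [n [<- Hn]].
    destruct (Hl n Hn) as [Hb Hh].
    pose proof (Rabs_def2 _ _ (block_label_near n0 n Hb)) as Hnear.
    unfold hits, in_interval in Hh.
    destruct (Rle_dec x _); [|discriminate]; destruct (Rle_dec _ y); [|discriminate].
    fold F0 in Hnear; split; nra.
Qed.

Lemma block_count_error n0 lam : 0 <= lam <= 1 ->
  Rabs (INR (count_from (hits th 0 lam) n0 q) - INR q * lam) <= 3.
Proof.
  intros Hl.
  pose proof (block_count_upper n0 0 lam ltac:(lra)).
  pose proof (block_count_upper n0 lam 1 ltac:(lra)).
  pose proof (le_INR _ _ (count_from_cover _ _ n0 q (hits_cover th lam))) as Hc.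
  rewrite plus_INR in Hc; apply Rabs_le; lra.
Qed.

Lemma blocks_count_error m n0 lam : 0 <= lam <= 1 ->
  Rabs (INR (count_from (hits th 0 lam) n0 (m * q)) - INR (m * q) * lam) <= 3 * INR m.
Proof.
  intros Hl; revert n0; induction m as [|m IH]; intros n0.
  - unfold count_from; simpl; rewrite Rmult_0_l, Rminus_0_r, Rabs_R0; lra.
  - replace (S m * q)%nat with (q + m * q)%nat by lia.
    rewrite count_from_add, !plus_INR, S_INR.
    pose proof (Rabs_le_between _ _ (block_count_error n0 lam Hl)).
    pose proof (Rabs_le_between _ _ (IH (n0 + q)%nat)).
    apply Rabs_le; lra.
Qed.

End Block.

Lemma pigeonhole_nat n (f : nat -> nat) : (forall i, (i <= n)%nat -> (f i < n)%nat) ->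
  exists i j, (i < j <= n)%nat /\ f i = f j.
Proof.
  intros Hf; apply NNPP; intros Hno.
  assert (Hnd : NoDup (map f (seq 0 (S n)))).
  { apply NoDup_map_NoDup_ForallPairs; [|apply seq_NoDup].
    intros x y Hx Hy He; apply in_seq in Hx, Hy.
    destruct (lt_eq_lt_dec x y) as [[H|H]|H]; auto; exfalso; apply Hno.
    - exists x, y; split; [lia|auto].
    - exists y, x; split; [lia|auto]. }
  assert (Hinc : incl (map f (seq 0 (S n))) (seq 0 n)).
  { intros z Hz; apply in_map_iff in Hz as [i [<- Hi]].
    apply in_seq in Hi; apply in_seq; specialize (Hf i ltac:(lia)); lia. }
  pose proof (NoDup_incl_length Hnd Hinc) as H.
  rewrite length_map, !length_seq in H; lia.
Qed.

Lemma dirichlet th N : (1 <= N)%nat ->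
  exists q p, (1 <= q <= N)%nat /\ Rabs (INR q * th - IZR p) < / INR N.
Proof.
  intros HN.
  assert (HN0 : 0 < INR N) by (apply lt_0_INR; lia).
  set (cell := fun j : nat => Int_part (INR N * frac (INR j * th))).
  assert (Hcell : forall j, (0 <= cell j < Z.of_nat N)%Z).
  { intros j; unfold cell; destruct (frac_bounds (INR j * th)).
    destruct (base_Int_part (INR N * frac (INR j * th))).
    split.
    - assert (-1 < Int_part (INR N * frac (INR j * th)))%Z by (apply lt_IZR; simpl; nra).
      lia.
    - apply lt_IZR; rewrite <- INR_IZR_INZ; nra. }
  destruct (pigeonhole_nat N (fun j => Z.to_nat (cell j))) as [i [j [Hij He]]].
  { intros i _; specialize (Hcell i); lia. }
  assert (Hsame : cell i = cell j) by (pose proof (Hcell i); pose proof (Hcell j); lia).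
  exists (j - i)%nat, (Int_part (INR j * th) - Int_part (INR i * th))%Z; split; [lia|].
  unfold cell in Hsame.
  destruct (base_Int_part (INR N * frac (INR i * th))).
  destruct (base_Int_part (INR N * frac (INR j * th))).
  rewrite Hsame in *.
  replace (INR (j - i) * th - IZR (Int_part (INR j * th) - Int_part (INR i * th)))
    with (frac (INR j * th) - frac (INR i * th))
    by (unfold frac, frac_part; rewrite minus_INR, minus_IZR by lia; ring).
  assert (Hinv : INR N * / INR N = 1) by (apply Rinv_r; lra).
  apply Rabs_def1; apply (Rmult_lt_reg_l (INR N)); nra.
Qed.

Lemma best_denominator th N : (1 <= N)%nat ->
  exists q p, (1 <= q <= N)%nat /\ Rabs (INR q * th - IZR p) < / INR N /\
    forall (j : nat) (k : Z), (1 <= j < q)%nat -> / INR N <= Rabs (INR j * th - IZR k).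
Proof.
  intros HN.
  set (good := fun q => (1 <= q)%nat /\ exists p, Rabs (INR q * th - IZR p) < / INR N).
  destruct (dec_inh_nat_subset_has_unique_least_element good) as [q [[Hq Hleast] _]].
  - intros n; apply classic.
  - destruct (dirichlet th N HN) as [q [p [Hq Hp]]]; exists q; split; [lia|eauto].
  - destruct Hq as [Hq1 [p Hp]].
    destruct (dirichlet th N HN) as [q0 [p0 [Hq0 Hp0]]].
    assert (q <= q0)%nat by (apply Hleast; split; [lia|eauto]).
    exists q, p; repeat split; auto; [lia|].
    intros j k Hj; apply Rnot_lt_le; intros Hc.
    assert (q <= j)%nat by (apply Hleast; split; [lia|eauto]).
    lia.
Qed.

Lemma ln_gt0 x : 1 < x -> 0 < ln x.
Proof. intros Hx; rewrite <- ln_1; apply ln_increasing; lra. Qed.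

Lemma ln_le_ln x y : 0 < x -> x <= y -> ln x <= ln y.
Proof. intros Hx [H|H]; [left; apply ln_increasing; lra|subst; lra]. Qed.

Lemma ln_le_sub1 t : 0 < t -> ln t <= t - 1.
Proof. intros Ht; pose proof (exp_ineq1_le (ln t)); rewrite exp_ln in *; lra. Qed.

(* t / ln t is nondecreasing for t >= 3 > e. *)
Lemma mul_ln_le x y : 3 <= x <= y -> x * ln y <= y * ln x.
Proof.
  intros [H1 H2].
  assert (Hlx : 1 <= ln x).
  { rewrite <- (ln_exp 1); apply ln_le_ln; [apply exp_pos|].
    pose proof exp_le_3; lra. }
  assert (Hq : ln y - ln x <= y / x - 1).
  { replace (ln y - ln x) with (ln (y / x))
      by (unfold Rdiv; rewrite ln_mult, ln_Rinv; try apply Rinv_0_lt_compat; lra).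
    apply ln_le_sub1, Rdiv_lt_0_compat; lra. }
  apply (Rmult_le_compat_l x) in Hq; [|lra].
  replace (x * (y / x - 1)) with (y - x) in Hq by (field; lra).
  nra.
Qed.

Lemma nat_mul_ln_le (m : nat) K : 4 <= K -> (2 <= m)%nat -> INR m <= K ->
  INR m * ln K <= K * ln (INR m).
Proof.
  intros HK Hm HmK.
  destruct (Nat.eq_dec m 2) as [->|Hm2].
  - pose proof (mul_ln_le 4 K ltac:(lra)) as H.
    replace 4 with (2 * 2) in H at 2 by lra; rewrite ln_mult in H by lra.
    replace (INR 2) with 2 by (simpl; lra); lra.
  - apply mul_ln_le; split; [|lra].
    replace 3 with (INR 3) by (simpl; lra); apply le_INR; lia.
Qed.

Lemma quotient_log_bound K (m q r : nat) :
  4 <= K -> (1 <= m)%nat -> INR m < K -> (r < q)%nat -> (2 <= m * q + r)%nat ->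
  3 * INR m + 3 * (K / ln K) * ln (INR (Nat.max r 1))
    <= 3 * (K / ln K) * ln (INR (m * q + r)).
Proof.
  intros HK Hm HmK Hr HN.
  assert (HlK : 0 < ln K) by (apply ln_gt0; lra).
  set (M := Nat.max m 2).
  assert (HMK : INR M <= K).
  { unfold M; destruct (Nat.max_spec m 2) as [[_ ->]|[_ ->]]; simpl; lra. }
  assert (HmM : INR m <= INR M) by (apply le_INR; lia).
  assert (HM0 : 0 < INR M) by (apply lt_0_INR; lia).
  assert (Hr0 : 0 < INR (Nat.max r 1)) by (apply lt_0_INR; lia).
  assert (HMln : INR M <= K / ln K * ln (INR M)).
  { pose proof (nat_mul_ln_le M K HK ltac:(lia) HMK).
    apply (Rmult_le_reg_r (ln K)); [lra|].
    unfold Rdiv; replace (K * / ln K * ln (INR M) * ln K) with (K * ln (INR M))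
      by (field; lra); lra. }
  assert (Hln : ln (INR (Nat.max r 1)) + ln (INR M) <= ln (INR (m * q + r))).
  { rewrite <- ln_mult, <- mult_INR by lra.
    apply ln_le_ln; [rewrite mult_INR; nra|apply le_INR].
    unfold M; destruct (Nat.max_spec m 2) as [[_ ->]|[_ ->]];
      destruct (Nat.max_spec r 1) as [[_ ->]|[_ ->]]; nia. }
  assert (0 <= K / ln K) by (apply Rlt_le, Rdiv_lt_0_compat; lra).
  nra.
Qed.

Definition badly_approximable (th K : R) : Prop :=
  forall (q : nat) (p : Z), (1 <= q)%nat -> / K <= INR q * Rabs (INR q * th - IZR p).

Lemma badly_approximable_denominator th K N q p : 0 < K -> badly_approximable th K ->
  (1 <= N)%nat -> (1 <= q)%nat -> Rabs (INR q * th - IZR p) < / INR N -> INR N < K * INR q.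
Proof.
  intros HK Hbad HN Hq Hp.
  assert (HN0 : 0 < INR N) by (apply lt_0_INR; lia).
  assert (Hq0 : 0 < INR q) by (apply lt_0_INR; lia).
  specialize (Hbad q p Hq).
  assert (Hlt : / K < INR q * / INR N).
  { eapply Rle_lt_trans; [exact Hbad|]; apply Rmult_lt_compat_l; lra. }
  apply Rinv_lt_contravar in Hlt; [|apply Rmult_lt_0_compat, Rmult_lt_0_compat;
    try apply Rinv_0_lt_compat; lra].
  rewrite Rinv_inv, Rinv_mult, Rinv_inv in Hlt.
  apply (Rmult_lt_reg_r (/ INR q)); [apply Rinv_0_lt_compat; lra|].
  rewrite Rmult_assoc, Rinv_r; lra.
Qed.

Lemma count_error_badly_approximable th K : 4 <= K -> badly_approximable th K ->
  forall N n0 lam, (1 <= N)%nat -> 0 <= lam <= 1 ->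
  Rabs (INR (count_from (hits th 0 lam) n0 N) - INR N * lam)
    <= 3 * (K / ln K) * ln (INR N) + 1.
Proof.
  intros HK Hbad N; induction N as [N IH] using lt_wf_ind; intros n0 lam HN Hl.
  destruct (Nat.eq_dec N 1) as [->|HN1].
  { pose proof (le_INR _ _ (count_from_le (hits th 0 lam) n0 1)).
    pose proof (pos_INR (count_from (hits th 0 lam) n0 1)).
    simpl INR in *; rewrite ln_1, Rmult_0_r; apply Rabs_le; lra. }
  destruct (best_denominator th N HN) as [q [p [Hq [Hp Hmin]]]].
  assert (HNK := badly_approximable_denominator th K N q p ltac:(lra) Hbad HN ltac:(lia) Hp).
  assert (Heps : / INR N <= / INR q)
    by (apply Rinv_le_contravar; [apply lt_0_INR; lia|apply le_INR; lia]).
  set (m := (N / q)%nat); set (r := (N mod q)%nat).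
  assert (HNmr : N = (m * q + r)%nat) by (pose proof (Nat.div_mod N q); unfold m, r; lia).
  assert (Hr : (r < q)%nat) by (apply Nat.mod_upper_bound; lia).
  assert (Hm : (1 <= m)%nat) by (apply Nat.div_le_lower_bound; lia).
  assert (HmK : INR m < K).
  { assert (INR (m * q) <= INR N) by (apply le_INR; lia).
    assert (0 < INR q) by (apply lt_0_INR; lia).
    rewrite mult_INR in *; nra. }
  assert (Hrem : Rabs (INR (count_from (hits th 0 lam) (n0 + m * q) r) - INR r * lam)
                   <= 3 * (K / ln K) * ln (INR (Nat.max r 1)) + 1).
  { destruct (Nat.eq_dec r 0) as [->|Hr0].
    - unfold count_from; simpl; rewrite ln_1, Rmult_0_l, Rminus_0_r, Rabs_R0; lra.
    - replace (Nat.max r 1) with r by lia; apply IH; auto; lia. }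
  pose proof (blocks_count_error th (/ INR N) q p ltac:(lia) Hp Heps Hmin m n0 lam Hl) as Hblk.
  pose proof (quotient_log_bound K m q r HK Hm HmK Hr ltac:(lia)) as Hlog.
  rewrite <- HNmr in Hlog.
  replace (count_from (hits th 0 lam) n0 N)
    with (count_from (hits th 0 lam) n0 (m * q) + count_from (hits th 0 lam) (n0 + m * q) r)%nat
    by (rewrite HNmr at 1; symmetry; apply count_from_add).
  replace (INR N * lam) with (INR (m * q) * lam + INR r * lam)
    by (rewrite HNmr at 1; rewrite plus_INR; ring).
  rewrite plus_INR.
  apply Rabs_le_between in Hblk, Hrem; apply Rabs_le; lra.
Qed.

Lemma discrepancy_badly_approximable th K N : 4 <= K -> badly_approximable th K ->
  (2 <= N)%nat -> INR N * discrepancy th N <= 5 * (K / ln K) * ln (INR N).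
Proof.
  intros HK Hbad HN.
  assert (HN0 : 2 <= INR N) by (apply (le_INR 2); lia).
  assert (HlN : / 2 < ln (INR N)) by (eapply Rlt_le_trans; [apply ln_lt_2|apply ln_le_ln; lra]).
  assert (HlK : 0 < ln K) by (apply ln_gt0; lra).
  assert (HKl : 1 <= K / ln K).
  { pose proof (ln_le_sub1 K ltac:(lra)); apply (Rmult_le_reg_r (ln K)); [lra|].
    unfold Rdiv; rewrite Rmult_assoc, Rinv_l; lra. }
  assert (HD : discrepancy th N <= (3 * (K / ln K) * ln (INR N) + 1) / INR N).
  { unfold discrepancy; destruct (completeness _ _ _) as [D HDlub]; simpl.
    apply (proj2 HDlub); intros d [lam [Hl ->]].
    pose proof (count_error_badly_approximable th K HK Hbad N 0 lam ltac:(lia) Hl) as H.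
    rewrite <- count_in_count_from in H.
    replace (INR (count_in th lam N) / INR N - lam)
      with ((INR (count_in th lam N) - INR N * lam) / INR N) by (field; lra).
    unfold Rdiv; rewrite Rabs_mult, (Rabs_right (/ INR N))
      by (left; apply Rinv_0_lt_compat; lra).
    apply Rmult_le_compat_r; [left; apply Rinv_0_lt_compat; lra|exact H]. }
  apply (Rmult_le_compat_l (INR N)) in HD; [|lra].
  replace (INR N * ((3 * (K / ln K) * ln (INR N) + 1) / INR N))
    with (3 * (K / ln K) * ln (INR N) + 1) in HD by (field; lra).
  nra.
Qed.

Lemma anisotropic_of_sqrt_irrational (a b : Z) : (0 < a)%Z ->
  (~ exists p q : Z, q <> 0%Z /\ sqrt (IZR b / IZR a) = IZR p / IZR q) ->
  forall x y : Z, (a * x * x = b * y * y)%Z -> x = 0%Z /\ y = 0%Z.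
Proof.
  intros Ha Hirr x y Hxy.
  destruct (Z.eq_dec y 0) as [->|Hy].
  { rewrite Z.mul_0_r in Hxy; split; [nia|reflexivity]. }
  exfalso; apply Hirr; exists (Z.abs x), (Z.abs y); split; [lia|].
  assert (Hy' : IZR y <> 0) by (apply not_0_IZR; auto).
  assert (Ha' : 0 < IZR a) by (apply IZR_lt; auto).
  rewrite !abs_IZR; unfold Rdiv at 2.
  rewrite <- Rabs_inv, <- Rabs_mult, <- sqrt_Rsqr_abs; f_equal.
  apply (f_equal IZR) in Hxy; rewrite !mult_IZR in Hxy.
  replace (IZR b) with (IZR a * IZR x * IZR x / (IZR y * IZR y))
    by (rewrite Hxy; field; auto).
  unfold Rsqr; field; lra.
Qed.

Section QuadraticIrrational.

Variables (a b : Z) (alpha : R).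
Hypotheses (Ha : (0 < a)%Z) (Hab : (a < b)%Z) (Halpha : 0 < alpha)
  (Halpha2 : IZR a * (alpha * alpha) = IZR b)
  (Hanis : forall x y : Z, (a * x * x = b * y * y)%Z -> x = 0%Z /\ y = 0%Z).

Let Ha0 : 1 <= IZR a.
Proof. apply IZR_le; lia. Qed.

Lemma alpha_gt1 : 1 < alpha.
Proof.
  assert (Hsq : IZR a * 1 < IZR a * (alpha * alpha))
    by (rewrite Halpha2, Rmult_1_r; apply IZR_lt; auto).
  apply Rmult_lt_reg_l in Hsq; [nra|pose proof Ha0; lra].
Qed.

(* a (x - alpha y)(x + alpha y) = a x^2 - b y^2 is a nonzero integer. *)
Lemma norm_form_ge1 x y : (x, y) <> (0%Z, 0%Z) ->
  1 <= IZR a * (Rabs (IZR x - alpha * IZR y) * Rabs (IZR x + alpha * IZR y)).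
Proof.
  intros Hxy.
  assert (Hnz : (a * x * x - b * y * y)%Z <> 0%Z).
  { intros E; apply Hxy; destruct (Hanis x y) as [-> ->]; [lia|reflexivity]. }
  replace (IZR a * (Rabs (IZR x - alpha * IZR y) * Rabs (IZR x + alpha * IZR y)))
    with (Rabs (IZR (a * x * x - b * y * y))).
  - rewrite <- abs_IZR; apply IZR_le; lia.
  - rewrite <- (Rabs_right (IZR a)) by lra; rewrite <- !Rabs_mult; f_equal.
    rewrite minus_IZR, !mult_IZR, <- Halpha2; ring.
Qed.

Lemma conj_forms_product_le (l m : Z) d : (Z.abs l <= d)%Z -> (Z.abs m <= d)%Z ->
  Rabs ((IZR l + alpha * IZR m) * (IZR l - alpha * IZR m))
    <= 2 * (alpha * alpha) * (IZR d * IZR d).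
Proof.
  intros Hl Hm; pose proof alpha_gt1.
  assert (IZR l * IZR l <= IZR d * IZR d) by (rewrite <- !mult_IZR; apply IZR_le; nia).
  assert (IZR m * IZR m <= IZR d * IZR d) by (rewrite <- !mult_IZR; apply IZR_le; nia).
  assert (alpha * alpha * (IZR m * IZR m) <= alpha * alpha * (IZR d * IZR d))
    by (apply Rmult_le_compat_l; nra).
  replace ((IZR l + alpha * IZR m) * (IZR l - alpha * IZR m))
    with (IZR l * IZR l - alpha * alpha * (IZR m * IZR m)) by ring.
  assert (0 <= (alpha * alpha - 1) * (IZR d * IZR d)) by (apply Rmult_le_pos; nra).
  assert (0 <= alpha * alpha * (IZR m * IZR m)) by (apply Rmult_le_pos; nra).
  assert (0 <= IZR l * IZR l) by nra.
  apply Rabs_le; split; lra.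
Qed.

Lemma ray_bound_inv_le (d Q u P : R) : 1 <= d -> 1 <= Q -> 0 <= u -> 0 <= P ->
  P <= 8 * (alpha * alpha) * (d * d) ->
  1 <= IZR a * u * (2 * alpha * d * Q + P * u) -> / (8 * (IZR b * d)) <= Q * u.
Proof.
  intros Hd HQ Hu HP HPd Hray.
  pose proof Ha0.
  assert (Hb : 1 <= IZR b) by (assert (IZR a < IZR b) by (apply IZR_lt; auto); lra).
  assert (Hal : IZR a * alpha <= IZR b) by (pose proof alpha_gt1; nra).
  set (K := 8 * (IZR b * d)).
  assert (HK : 1 <= K) by (unfold K; nra).
  apply Rnot_lt_le; intros Hc.
  assert (HtK : Q * u * K < 1).
  { apply (Rmult_lt_compat_r K) in Hc; [|lra]; rewrite Rinv_l in Hc; lra. }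
  assert (Huq : u <= Q * u) by nra.
  assert (Hlin : IZR a * u * (2 * alpha * d * Q) * 4 < 1).
  { assert (IZR a * u * (2 * alpha * d * Q) <= 2 * IZR b * d * (Q * u)).
    { replace (IZR a * u * (2 * alpha * d * Q)) with (2 * (IZR a * alpha) * d * (Q * u)) by ring.
      apply Rmult_le_compat_r; [nra|]; apply Rmult_le_compat_r; lra. }
    unfold K in HtK; nra. }
  assert (Hquad : IZR a * u * (P * u) * 8 < 1).
  { assert (IZR a * u * (P * u) <= 8 * IZR b * (d * u) * (d * u)).
    { replace (8 * IZR b * (d * u) * (d * u))
        with (IZR a * u * u * (8 * (alpha * alpha) * (d * d))) by (rewrite <- Halpha2; ring).
      replace (IZR a * u * (P * u)) with (IZR a * u * u * P) by ring.
      apply Rmult_le_compat_l; [nra|lra]. }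
    assert (Hdu : IZR b * (d * u) * 8 < 1).
    { assert (d * u <= Q * u * d) by nra.
      unfold K in HtK; nra. }
    assert (0 <= d * u) by nra.
    nra. }
  nra.
Qed.

Section Ratio.

Variables (l1 m1 l2 m2 : Z).
Hypothesis (Hdet : zdet (l1, m1) (l2, m2) <> 0%Z).

Let theta := - ((IZR l1 - alpha * IZR m1) / (IZR l2 - alpha * IZR m2)).
Let d := IZR (lattice_det (l1, m1) (l2, m2)).

(* For v = q e1 + p e2, the conjugate linear forms satisfy
   v1 - alpha v2 = - (q theta - p)(l2 - alpha m2) and
   (v1 + alpha v2)(l2 - alpha m2) = - 2 alpha det q + (l2 + alpha m2)(v1 - alpha v2). *)
Lemma ray_norm_bound (q : nat) (p : Z) : (1 <= q)%nat ->
  1 <= IZR a * Rabs (INR q * theta - IZR p) *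
       (2 * alpha * d * INR q +
        Rabs ((IZR l2 + alpha * IZR m2) * (IZR l2 - alpha * IZR m2))
          * Rabs (INR q * theta - IZR p)).
Proof.
  intros Hq.
  set (Dz := zdet (l1, m1) (l2, m2)).
  assert (HdD : d = Rabs (IZR Dz)) by apply abs_IZR.
  set (Le2 := IZR l2 - alpha * IZR m2); set (Lp2 := IZR l2 + alpha * IZR m2).
  assert (HLe2 : Le2 <> 0).
  { intros E; apply Hdet.
    assert (Hlm : IZR (a * l2 * l2) = IZR (b * m2 * m2)).
    { rewrite !mult_IZR; replace (IZR l2) with (alpha * IZR m2) by (unfold Le2 in E; lra).
      rewrite <- Halpha2; ring. }
    apply eq_IZR, Hanis in Hlm as [-> ->]; unfold Dz, zdet; simpl; ring. }
  set (x := (Z.of_nat q * l1 + p * l2)%Z); set (y := (Z.of_nat q * m1 + p * m2)%Z).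
  assert (Hxy : (x, y) <> (0%Z, 0%Z)).
  { intros E; injection E as Hx Hy; apply Hdet.
    assert (Hq0 : (Z.of_nat q * Dz = x * m2 - y * l2)%Z) by (unfold x, y, Dz, zdet; simpl; ring).
    rewrite Hx, Hy in Hq0; fold Dz; nia. }
  assert (HX : IZR x = INR q * IZR l1 + IZR p * IZR l2)
    by (unfold x; rewrite plus_IZR, !mult_IZR, <- INR_IZR_INZ; reflexivity).
  assert (HY : IZR y = INR q * IZR m1 + IZR p * IZR m2)
    by (unfold y; rewrite plus_IZR, !mult_IZR, <- INR_IZR_INZ; reflexivity).
  set (s := INR q * theta - IZR p).
  assert (HLv : IZR x - alpha * IZR y = - s * Le2)
    by (unfold s, theta; rewrite HX, HY; unfold Le2 in *; field; exact HLe2).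
  assert (HLpv : (IZR x + alpha * IZR y) * Le2
                 = - 2 * alpha * IZR Dz * INR q + Lp2 * (IZR x - alpha * IZR y))
    by (unfold Lp2, Le2, Dz, zdet; rewrite HX, HY, minus_IZR, !mult_IZR; simpl; ring).
  assert (Hbound : Rabs (IZR x + alpha * IZR y) * Rabs Le2
                     <= 2 * alpha * d * INR q + Rabs (Lp2 * Le2) * Rabs s).
  { rewrite <- Rabs_mult, HLpv, HLv.
    eapply Rle_trans; [apply Rabs_triang|]; right.
    replace (-2 * alpha * IZR Dz * INR q) with (- (2 * alpha * INR q) * IZR Dz) by ring.
    rewrite (Rabs_mult (- _)), Rabs_Ropp, (Rabs_right (2 * alpha * INR q))
      by (pose proof (pos_INR q); nra).
    rewrite HdD, !Rabs_mult, Rabs_Ropp; ring. }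
  pose proof (norm_form_ge1 x y Hxy) as Hnorm.
  rewrite HLv, Rabs_mult, Rabs_Ropp in Hnorm.
  pose proof (Rabs_pos s); pose proof (Rabs_pos (IZR x + alpha * IZR y)).
  apply (Rle_trans _ _ _ Hnorm).
  replace (IZR a * (Rabs s * Rabs Le2 * Rabs (IZR x + alpha * IZR y)))
    with (IZR a * Rabs s * (Rabs (IZR x + alpha * IZR y) * Rabs Le2)) by ring.
  apply Rmult_le_compat_l; [nra|exact Hbound].
Qed.

Lemma badly_approximable_conjugate_ratio :
  (supnorm (l2, m2) <= 2 * lattice_det (l1, m1) (l2, m2))%Z ->
  badly_approximable theta (8 * (IZR b * d)).
Proof.
  intros Hsn q p Hq.
  unfold supnorm in Hsn; cbn [fst snd] in Hsn.
  pose proof (conj_forms_product_le l2 m2 (2 * lattice_det (l1, m1) (l2, m2))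
                ltac:(lia) ltac:(lia)) as Hprod.
  rewrite mult_IZR in Hprod; fold d in Hprod.
  apply (ray_bound_inv_le _ _ _ (Rabs ((IZR l2 + alpha * IZR m2) * (IZR l2 - alpha * IZR m2)))).
  - apply IZR_le; unfold lattice_det; lia.
  - apply (le_INR 1); lia.
  - apply Rabs_pos.
  - apply Rabs_pos.
  - nra.
  - apply ray_norm_bound; auto.
Qed.

End Ratio.

End QuadraticIrrational.

Lemma discrepancy_badly_approximable_scaled th X N : 2 <= X ->
  badly_approximable th (8 * X) -> (2 <= N)%nat ->
  INR N * discrepancy th N <= 40 * (X / ln X) * ln (INR N).
Proof.
  intros HX Hbad HN.
  assert (HlX : 0 < ln X) by (apply ln_gt0; lra).
  assert (HlN : 0 < ln (INR N)) by (apply ln_gt0; apply (lt_INR 1); lia).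
  assert (Hscale : 8 * X / ln (8 * X) <= 8 * (X / ln X)).
  { assert (0 < ln 8) by (apply ln_gt0; lra).
    rewrite ln_mult by lra; unfold Rdiv; rewrite <- Rmult_assoc.
    apply Rmult_le_compat_l; [lra|]; apply Rinv_le_contravar; lra. }
  eapply Rle_trans; [apply (discrepancy_badly_approximable th (8 * X)); auto; lra|].
  apply Rmult_le_compat_r; lra.
Qed.

Lemma first_minimum_le_det e1 e2 nu : zdet e1 e2 <> 0%Z -> is_nu1 e1 e2 nu ->
  (nu <= lattice_det e1 e2)%Z.
Proof.
  destruct e1 as [l1 m1], e2 as [l2 m2]; intros Hdet [_ Hmin].
  assert (Hv : in_lattice (l1, m1) (l2, m2) (zdet (l1, m1) (l2, m2), 0%Z))
    by (exists m2, (- m1)%Z; unfold zdet; cbn [fst snd]; split; ring).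
  assert (Hv0 : (zdet (l1, m1) (l2, m2), 0%Z) <> (0%Z, 0%Z)) by congruence.
  specialize (Hmin _ Hv Hv0); unfold supnorm, lattice_det in *; cbn [fst snd] in Hmin; lia.
Qed.

Theorem mainTheorem15 :
  exists C : R, forall (a b : Z) (lam1 mu1 lam2 mu2 nu1 nu2 : Z) (N : nat),
    (0 < a)%Z -> (a < b)%Z -> Z.gcd a b = 1%Z ->
    (~ exists p q : Z, q <> 0%Z /\ sqrt (IZR b / IZR a) = IZR p / IZR q) ->
    zdet (lam1, mu1) (lam2, mu2) <> 0%Z ->
    is_nu1 (lam1, mu1) (lam2, mu2) nu1 ->
    is_nu2 (lam1, mu1) (lam2, mu2) nu2 ->
    (supnorm (lam1, mu1) <= 2 * nu2)%Z ->
    (supnorm (lam2, mu2) <= 2 * nu1)%Z ->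
    (1 < N)%nat ->
    let alpha := sqrt (IZR b / IZR a) in
    let theta := - ((IZR lam1 - alpha * IZR mu1) / (IZR lam2 - alpha * IZR mu2)) in
    let dG := IZR (lattice_det (lam1, mu1) (lam2, mu2)) in
    INR N * discrepancy alpha N <= C * (IZR b / ln (IZR b)) * ln (INR N) /\
    INR N * discrepancy theta N <=
      C * (IZR b * dG / ln (IZR b * dG)) * ln (INR N).
Proof.
  exists 40; intros a b lam1 mu1 lam2 mu2 nu1 nu2 N Ha Hab _ Hirr Hdet Hnu1 _ _ Hsn HN
    alpha theta dG.
  assert (Hb : 2 <= IZR b) by (apply IZR_le; lia).
  assert (Hba : 0 < IZR b / IZR a) by (apply Rdiv_lt_0_compat; [lra|apply IZR_lt; lia]).
  assert (Halpha : 0 < alpha) by (apply sqrt_lt_R0; lra).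
  assert (Halpha2 : IZR a * (alpha * alpha) = IZR b).
  { unfold alpha; rewrite sqrt_sqrt by lra; field; apply not_0_IZR; lia. }
  pose proof (anisotropic_of_sqrt_irrational a b Ha Hirr) as Hanis.
  assert (HdG : 1 <= dG) by (apply IZR_le; unfold lattice_det; lia).
  split.
  - apply discrepancy_badly_approximable_scaled; [lra| |lia].
    pose proof (badly_approximable_conjugate_ratio a b alpha Ha Hab Halpha Halpha2 Hanis
                  0 1 1 0 ltac:(cbv; discriminate) ltac:(cbv; discriminate)) as Hbad.
    replace (- ((IZR 0 - alpha * IZR 1) / (IZR 1 - alpha * IZR 0))) with alpha in Hbad
      by (simpl; field).
    replace (IZR (lattice_det (0%Z, 1%Z) (1%Z, 0%Z))) with 1 in Hbad by reflexivity.
    now rewrite Rmult_1_r in Hbad.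
  - apply discrepancy_badly_approximable_scaled; [nra| |lia].
    apply (badly_approximable_conjugate_ratio a b alpha); auto.
    pose proof (first_minimum_le_det _ _ _ Hdet Hnu1); lia.
Qed.
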